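(* Let $f:\mathbb{R}\to\mathbb{R}$ be $f(y)=\sum_{k=0}^\infty 2^{-k}\|2^{k^2}y\|$, where $\|t\|=\operatorname{dist}(t,\mathbb{Z})$. Then $f$ is continuous and has no $\mathsf{M}$-points. Consequently every monotone subset of the graph of $f$ is meager in the graph, and $f$ has a derivative (finite or infinite) at no point.
   Context: With $\psi(x)=(x,f(x))$ and the Euclidean norm, $y$ is an $\mathsf{M}$-point of $f$ if there are $c\ge1$ and $\varepsilon>0$ with $|\psi(x)-\psi(y)|\le c|\psi(x)-\psi(z)|$ for all $x\in(y-\varepsilon,y)$, $z\in(y,y+\varepsilon)$. A metric space is monotone if there are a linear order $<$ and $c>0$ with $d(x,y)\le c\,d(x,z)$ whenever $x<y<z$. *)

From Stdlib Require Import Reals Lra.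
From Coquelicot Require Import Coquelicot.
Open Scope R_scope.

(* ||t|| = dist(t, Z): distance from t to the nearest integer.
   frac_part t = t - floor t lies in [0,1), so the nearest integer is
   floor t or floor t + 1. *)
Definition distZ (t : R) : R := Rmin (frac_part t) (1 - frac_part t).

Definition f_term (y : R) (k : nat) : R := / 2 ^ k * distZ (2 ^ (k * k) * y).
Definition takagi_f (y : R) : R := Series (f_term y).

Definition dist2 (p q : R * R) : R :=
  sqrt ((fst p - fst q) ^ 2 + (snd p - snd q) ^ 2).

Definition psi (g : R -> R) (x : R) : R * R := (x, g x).

Definition M_point (g : R -> R) (y : R) : Prop :=
  exists c eps : R, 1 <= c /\ 0 < eps /\
    forall x z : R, y - eps < x < y -> y < z < y + eps ->
      dist2 (psi g x) (psi g y) <= c * dist2 (psi g x) (psi g z).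

Definition graph (g : R -> R) (p : R * R) : Prop := snd p = g (fst p).

Definition strict_linear_order_on (S : R * R -> Prop) (lt : R * R -> R * R -> Prop) : Prop :=
  (forall x, S x -> ~ lt x x) /\
  (forall x y z, S x -> S y -> S z -> lt x y -> lt y z -> lt x z) /\
  (forall x y, S x -> S y -> lt x y \/ x = y \/ lt y x).

Definition monotone_set (S : R * R -> Prop) : Prop :=
  exists (lt : R * R -> R * R -> Prop) (c : R),
    strict_linear_order_on S lt /\ 0 < c /\
    forall x y z, S x -> S y -> S z -> lt x y -> lt y z ->
      dist2 x y <= c * dist2 x z.

Definition closure_in (G A : R * R -> Prop) (p : R * R) : Prop :=
  G p /\ forall r, 0 < r -> exists a, G a /\ A a /\ dist2 p a < r.

Definition interior_in (G B : R * R -> Prop) (p : R * R) : Prop :=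
  G p /\ exists r, 0 < r /\ forall q, G q -> dist2 p q < r -> B q.

Definition nowhere_dense_in (G A : R * R -> Prop) : Prop :=
  forall p, ~ interior_in G (closure_in G A) p.

Definition meager_in (G S : R * R -> Prop) : Prop :=
  exists N : nat -> (R * R -> Prop),
    (forall n, nowhere_dense_in G (N n)) /\
    (forall p, S p -> exists n, N n p).

(* Split f = F_N + T_N into its first N terms and its tail. At the scale D = 2^-(N^2) the head
   F_N barely moves (it is Lipschitz with constant at most 4 * 2^(N^2) / 4^N), while the tail
   T_N is D-periodic, vanishes on D Z and is at least 2^-N ||y / D||; if ||2^(k^2) y|| < 1/8 for
   all k >= N it is even at most 2^-N / 4 at y, but 2^-N / 2 on D (Z + 1/2). So around y there
   are x < y < z at distance O(D) with |psi x - psi z| = O(4^-N) and |f x - f y| of order 2^-N: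
   neighbours in D Z if ||2^(N^2) y|| >= 1/8 for arbitrarily large N, neighbours in
   D (Z + 1/2) otherwise. Hence f has no M-point, while a point with a finite or infinite
   derivative is an M-point.
   A monotone subset A of the graph of a continuous function without M-points is nowhere
   dense: were A dense over an interval, uniform continuity would force all points of A on
   one side of u to lie on one side of u in the order, so the order follows the abscissa up to
   reversal (a reversed monotone order is monotone), and by density the monotonicity
   inequality passes from A to the graph near a point of A, which is then an M-point. *)

From Stdlib Require Import Reals Rgeom Lra Lia Psatz Classical.
From Coquelicot Require Import Coquelicot.
Open Scope R_scope.

Lemma dist2_euc p q : dist2 p q = dist_euc (fst p) (snd p) (fst q) (snd q).
Proof. unfold dist2, dist_euc. now rewrite !Rsqr_pow2. Qed.

Lemma dist2_triangle p q r : dist2 p r <= dist2 p q + dist2 q r.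
Proof. rewrite !dist2_euc. apply triangle. Qed.

Lemma dist2_sym p q : dist2 p q = dist2 q p.
Proof. unfold dist2. f_equal. ring. Qed.

Lemma dist2_ge0 p q : 0 <= dist2 p q.
Proof. apply sqrt_pos. Qed.

Lemma dist2_refl p : dist2 p p = 0.
Proof. unfold dist2. rewrite !Rminus_diag. simpl. rewrite !Rmult_0_l, Rplus_0_r. apply sqrt_0. Qed.

Lemma Rabs_le_sqrt_plus_sqr a b : Rabs a <= sqrt (a ^ 2 + b ^ 2).
Proof.
  rewrite <- (sqrt_pow2 (Rabs a)) by apply Rabs_pos.
  apply sqrt_le_1_alt. rewrite pow2_abs. nra.
Qed.

Lemma dist2_ge_fst p q : Rabs (fst p - fst q) <= dist2 p q.
Proof. apply Rabs_le_sqrt_plus_sqr. Qed.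

Lemma dist2_ge_snd p q : Rabs (snd p - snd q) <= dist2 p q.
Proof. unfold dist2. rewrite Rplus_comm. apply Rabs_le_sqrt_plus_sqr. Qed.

Lemma dist2_le_compat p q r s :
  Rabs (fst p - fst q) <= Rabs (fst r - fst s) ->
  Rabs (snd p - snd q) <= Rabs (snd r - snd s) -> dist2 p q <= dist2 r s.
Proof.
  intros h1 h2. unfold dist2. apply sqrt_le_1_alt.
  rewrite <- (pow2_abs (fst p - fst q)), <- (pow2_abs (snd p - snd q)),
    <- (pow2_abs (fst r - fst s)), <- (pow2_abs (snd r - snd s)).
  pose proof (Rabs_pos (fst p - fst q)). pose proof (Rabs_pos (snd p - snd q)). nra.
Qed.

Lemma dist2_le_abs p q : dist2 p q <= Rabs (fst p - fst q) + Rabs (snd p - snd q).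
Proof.
  pose proof (Rabs_pos (fst p - fst q)). pose proof (Rabs_pos (snd p - snd q)).
  unfold dist2. rewrite <- (sqrt_pow2 (Rabs _ + Rabs _)) by lra.
  apply sqrt_le_1_alt. rewrite <- (pow2_abs (fst p - fst q)), <- (pow2_abs (snd p - snd q)). nra.
Qed.

Lemma distZ_le t k : distZ t <= Rabs (t - IZR k).
Proof.
  unfold distZ, frac_part. destruct (base_Int_part t) as [h1 h2].
  destruct (Z.le_gt_cases k (Int_part t)) as [h|h].
  - apply IZR_le in h. eapply Rle_trans; [apply Rmin_l|]. unfold Rabs; destruct Rcase_abs; lra.
  - assert (IZR (Int_part t) + 1 <= IZR k) by (rewrite <- plus_IZR; apply IZR_le; lia).
    eapply Rle_trans; [apply Rmin_r|]. unfold Rabs; destruct Rcase_abs; lra.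
Qed.

Lemma distZ_attained t : exists m, distZ t = Rabs (t - IZR m).
Proof.
  unfold distZ, frac_part. destruct (base_Int_part t) as [h1 h2].
  destruct (Rle_or_lt (t - IZR (Int_part t)) (1 - (t - IZR (Int_part t)))) as [h|h].
  - exists (Int_part t). rewrite Rmin_left by lra. unfold Rabs; destruct Rcase_abs; lra.
  - exists (Int_part t + 1)%Z. rewrite Rmin_right, plus_IZR by lra.
    unfold Rabs; destruct Rcase_abs; lra.
Qed.

Lemma distZ_eq t d :
  (forall k, d <= Rabs (t - IZR k)) -> (exists m, d = Rabs (t - IZR m)) -> distZ t = d.
Proof.
  intros hlow [m ->]. destruct (distZ_attained t) as [m' hm'].
  apply Rle_antisym; [apply distZ_le | rewrite hm'; apply hlow].
Qed.

Lemma distZ_ge0 t : 0 <= distZ t.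
Proof. destruct (distZ_attained t) as [m ->]. apply Rabs_pos. Qed.

Lemma distZ_le_half t : distZ t <= 1 / 2.
Proof. unfold distZ. destruct (Rle_dec (frac_part t) (1 - frac_part t)).
  - rewrite Rmin_left; lra.
  - rewrite Rmin_right; lra.
Qed.

Lemma distZ_IZR k : distZ (IZR k) = 0.
Proof.
  apply distZ_eq; [intros; apply Rabs_pos|].
  exists k. now rewrite Rminus_diag, Rabs_R0.
Qed.

Lemma distZ_plus_IZR t k : distZ (t + IZR k) = distZ t.
Proof.
  apply distZ_eq.
  - intros j. replace (t + IZR k - IZR j) with (t - IZR (j - k)) by (rewrite minus_IZR; ring).
    apply distZ_le.
  - destruct (distZ_attained t) as [m ->]. exists (m + k)%Z.
    rewrite plus_IZR. f_equal. ring.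
Qed.

Lemma distZ_IZR_plus_half k : distZ (IZR k + 1 / 2) = 1 / 2.
Proof.
  apply distZ_eq; [|exists k; unfold Rabs; destruct Rcase_abs; lra].
  intros j. destruct (Z.le_gt_cases j k) as [h|h].
  - apply IZR_le in h. unfold Rabs; destruct Rcase_abs; lra.
  - assert (IZR k + 1 <= IZR j) by (rewrite <- plus_IZR; apply IZR_le; lia).
    unfold Rabs; destruct Rcase_abs; lra.
Qed.

Lemma distZ_lipschitz a b : Rabs (distZ a - distZ b) <= Rabs (a - b).
Proof.
  assert (hside : forall s t, distZ s <= distZ t + Rabs (s - t)).
  { intros s t. destruct (distZ_attained t) as [m ->].
    eapply Rle_trans; [apply (distZ_le s m)|].
    replace (s - IZR m) with ((t - IZR m) + (s - t)) by ring. apply Rabs_triang. }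
  pose proof (hside a b). pose proof (hside b a) as hba. rewrite Rabs_minus_sym in hba.
  unfold Rabs at 1; destruct Rcase_abs; lra.
Qed.

(** * Head and tail of the series *)

Lemma series_geom_bound (a : nat -> R) (C : R) :
  (forall k, 0 <= a k <= C * (/ 2) ^ k) -> ex_series a /\ 0 <= Series a <= 2 * C.
Proof.
  intros Ha.
  assert (hgeom : is_series (fun k => C * (/ 2) ^ k) (C * / (1 - / 2))).
  { apply (is_series_scal_l C (fun k => (/ 2) ^ k)), is_series_geom. rewrite Rabs_pos_eq; lra. }
  assert (hex : ex_series a).
  { apply (ex_series_le a (fun k => C * (/ 2) ^ k)); [|eexists; exact hgeom].
    intros n. change (norm (a n)) with (Rabs (a n)). rewrite Rabs_pos_eq; apply Ha. }
  split; [exact hex|]. split.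
  - replace 0 with (Series (fun n => 0 * a n)) by (rewrite Series_scal_l; ring).
    apply Series_le; [intros n; rewrite Rmult_0_l; split; [lra | apply Ha] | exact hex].
  - eapply Rle_trans; [apply Series_le; [apply Ha | eexists; exact hgeom]|].
    rewrite (is_series_unique _ _ hgeom). replace (1 - / 2) with (/ 2) by lra.
    rewrite Rinv_inv. lra.
Qed.

Lemma f_term_ge0 y k : 0 <= f_term y k.
Proof.
  apply Rmult_le_pos; [|apply distZ_ge0].
  left. apply Rinv_0_lt_compat, pow_lt. lra.
Qed.

Lemma f_term_eq y k : f_term y k = (/ 2) ^ k * distZ (2 ^ (k * k) * y).
Proof. unfold f_term. now rewrite pow_inv. Qed.

Lemma f_term_lipschitz a b k : Rabs (f_term a k - f_term b k) <= 2 ^ (k * k) * Rabs (a - b).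
Proof.
  rewrite !f_term_eq, <- Rmult_minus_distr_l, Rabs_mult, Rabs_pos_eq by (apply pow_le; lra).
  assert (h2 : (/ 2) ^ k <= 1) by (rewrite <- (pow1 k); apply pow_incr; lra).
  assert (h : Rabs (distZ (2 ^ (k * k) * a) - distZ (2 ^ (k * k) * b))
              <= 2 ^ (k * k) * Rabs (a - b)).
  { eapply Rle_trans; [apply distZ_lipschitz|].
    rewrite <- Rmult_minus_distr_l, Rabs_mult, Rabs_pos_eq by (apply pow_le; lra). lra. }
  pose proof (Rabs_pos (distZ (2 ^ (k * k) * a) - distZ (2 ^ (k * k) * b))).
  pose proof (pow_le (/ 2) k ltac:(lra)). nra.
Qed.

Definition takagi_tail (y : R) (N : nat) : R := Series (fun k => f_term y (N + k)).

Fixpoint takagi_head (y : R) (N : nat) : R :=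
  match N with O => 0 | S n => takagi_head y n + f_term y n end.

Lemma takagi_tail_bound y N B :
  (forall k, (N <= k)%nat -> distZ (2 ^ (k * k) * y) <= B) ->
  ex_series (fun k => f_term y (N + k)) /\ 0 <= takagi_tail y N <= 2 * B * (/ 2) ^ N.
Proof.
  intros hB. rewrite Rmult_assoc. apply series_geom_bound. intros k.
  split; [apply f_term_ge0|]. rewrite f_term_eq, Rmult_assoc, <- pow_add, Rmult_comm.
  apply Rmult_le_compat_r; [apply pow_le; lra | apply hB; lia].
Qed.

Lemma takagi_tail_le y N : 0 <= takagi_tail y N <= (/ 2) ^ N.
Proof.
  destruct (takagi_tail_bound y N (1 / 2)) as [_ h]; [intros; apply distZ_le_half | lra].
Qed.

Lemma takagi_tail_S y N : takagi_tail y N = f_term y N + takagi_tail y (S N).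
Proof.
  unfold takagi_tail. rewrite Series_incr_1, Nat.add_0_r.
  - f_equal. apply Series_ext. intros n. f_equal. lia.
  - apply (takagi_tail_bound y N (1 / 2)). intros; apply distZ_le_half.
Qed.

Lemma f_term_le_tail y N : f_term y N <= takagi_tail y N.
Proof. rewrite takagi_tail_S. pose proof (takagi_tail_le y (S N)). lra. Qed.

Lemma takagi_split y N : takagi_f y = takagi_head y N + takagi_tail y N.
Proof.
  induction N as [|N IH]; simpl.
  - rewrite Rplus_0_l. apply Series_ext. reflexivity.
  - rewrite IH, takagi_tail_S. ring.
Qed.

Fixpoint takagi_head_lip (N : nat) : R :=
  match N with O => 0 | S n => takagi_head_lip n + 2 ^ (n * n) end.

Lemma takagi_head_lip_ge0 N : 0 <= takagi_head_lip N.
Proof. induction N; simpl; [lra|]. pose proof (pow_lt 2 (N * N)). lra. Qed.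

Lemma takagi_head_lipschitz a b N :
  Rabs (takagi_head a N - takagi_head b N) <= takagi_head_lip N * Rabs (a - b).
Proof.
  induction N as [|N IH]; simpl.
  - rewrite Rminus_diag, Rabs_R0. lra.
  - replace (takagi_head a N + f_term a N - (takagi_head b N + f_term b N))
      with ((takagi_head a N - takagi_head b N) + (f_term a N - f_term b N)) by ring.
    eapply Rle_trans; [apply Rabs_triang|].
    pose proof (f_term_lipschitz a b N). lra.
Qed.

Lemma takagi_head_lip_bound N : takagi_head_lip N * 2 ^ (N + N) <= 4 * 2 ^ (N * N).
Proof.
  induction N as [|N IH]; simpl takagi_head_lip; [simpl; lra|].
  replace (2 ^ (S N + S N)) with (4 * 2 ^ (N + N))
    by (replace (S N + S N)%nat with (S (S (N + N))) by lia; simpl; ring).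
  replace (2 ^ (S N * S N)) with (2 ^ (N * N) * (2 * 2 ^ (N + N)))
    by (replace (S N * S N)%nat with (N * N + S (N + N))%nat by nia;
        rewrite (pow_add 2 (N * N)); reflexivity).
  pose proof (pow_lt 2 (N * N) ltac:(lra)).
  destruct N as [|N]; [simpl; lra|].
  assert (4 <= 2 ^ (S N + S N)).
  { replace (S N + S N)%nat with (S (S (N + N))) by lia. simpl.
    pose proof (pow_R1_Rle 2 (N + N) ltac:(lra)). lra. }
  nra.
Qed.

Lemma inv_pow2_sqr_le N : (2 <= N)%nat -> / 2 ^ (N * N) <= (/ 2) ^ N * (/ 2) ^ N.
Proof.
  intros hN. rewrite <- pow_add, pow_inv.
  apply Rinv_le_contravar; [apply pow_lt; lra | apply Rle_pow; [lra | nia]].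
Qed.

Lemma takagi_head_lip_grid_le N :
  takagi_head_lip N * / 2 ^ (N * N) <= 4 * ((/ 2) ^ N * (/ 2) ^ N).
Proof.
  rewrite <- pow_add, pow_inv.
  pose proof (pow_lt 2 (N * N) ltac:(lra)). pose proof (pow_lt 2 (N + N) ltac:(lra)).
  pose proof (takagi_head_lip_bound N) as hbound.
  apply Rmult_le_reg_r with (2 ^ (N * N) * 2 ^ (N + N)); [nra|].
  replace (takagi_head_lip N * / 2 ^ (N * N) * (2 ^ (N * N) * 2 ^ (N + N)))
    with (takagi_head_lip N * 2 ^ (N + N)) by (field; lra).
  replace (4 * / 2 ^ (N + N) * (2 ^ (N * N) * 2 ^ (N + N))) with (4 * 2 ^ (N * N))
    by (field; lra).
  exact hbound.
Qed.

Lemma takagi_head_close a b N K :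
  0 <= K -> Rabs (a - b) <= K * / 2 ^ (N * N) ->
  Rabs (takagi_head a N - takagi_head b N) <= 4 * K * ((/ 2) ^ N * (/ 2) ^ N).
Proof.
  intros hK hab. eapply Rle_trans; [apply takagi_head_lipschitz|].
  pose proof (takagi_head_lip_ge0 N). pose proof (takagi_head_lip_grid_le N).
  apply Rle_trans with (takagi_head_lip N * (K * / 2 ^ (N * N))); [apply Rmult_le_compat_l; lra|].
  nra.
Qed.

Lemma pow2_mul_grid N k m : (N <= k)%nat ->
  2 ^ (k * k) * (IZR m * / 2 ^ (N * N)) = IZR (m * 2 ^ Z.of_nat (k * k - N * N)).
Proof.
  intros h. rewrite mult_IZR, <- pow_IZR.
  replace (k * k)%nat with (N * N + (k * k - N * N))%nat at 1 by nia.
  rewrite pow_add. pose proof (pow_lt 2 (N * N) ltac:(lra)). field. lra.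
Qed.

Lemma takagi_tail_shift y m N : takagi_tail (y + IZR m * / 2 ^ (N * N)) N = takagi_tail y N.
Proof.
  apply Series_ext. intros k. unfold f_term. f_equal.
  rewrite Rmult_plus_distr_l, pow2_mul_grid by lia. apply distZ_plus_IZR.
Qed.

Lemma takagi_tail_grid m N : takagi_tail (IZR m * / 2 ^ (N * N)) N = 0.
Proof.
  rewrite <- (Rplus_0_l (IZR m * _)), takagi_tail_shift.
  destruct (takagi_tail_bound 0 N 0) as [_ h]; [|lra].
  intros k _. rewrite Rmult_0_r, distZ_IZR. lra.
Qed.

Lemma takagi_tail_half_grid m N :
  (/ 2) ^ N / 2 <= takagi_tail ((IZR m - 1 / 2) * / 2 ^ (N * N)) N.
Proof.
  eapply Rle_trans; [|apply f_term_le_tail]. rewrite f_term_eq.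
  replace (2 ^ (N * N) * ((IZR m - 1 / 2) * / 2 ^ (N * N))) with (IZR (m - 1) + 1 / 2).
  - rewrite distZ_IZR_plus_half. lra.
  - rewrite minus_IZR. pose proof (pow_lt 2 (N * N) ltac:(lra)). field. lra.
Qed.

Lemma pow_inv2_small (a : R) : 0 < a -> exists N, forall n, (N <= n)%nat -> (/ 2) ^ n < a.
Proof.
  intros ha. destruct (pow_lt_1_zero (/ 2) ltac:(rewrite Rabs_pos_eq; lra) a ha) as [N HN].
  exists N. intros n hn. specialize (HN n hn).
  rewrite Rabs_pos_eq in HN by (apply pow_le; lra). exact HN.
Qed.

Lemma takagi_continuous : continuity takagi_f.
Proof.
  intros x0 eps heps. simpl. unfold R_dist.
  destruct (pow_inv2_small (eps / 4) ltac:(lra)) as [N HN]. specialize (HN N (le_n N)).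
  pose proof (takagi_head_lip_ge0 N).
  exists (eps / (2 * (takagi_head_lip N + 1))). split; [apply Rdiv_lt_0_compat; lra|].
  intros x [_ hx].
  assert (hhead : takagi_head_lip N * Rabs (x - x0) <= eps / 2).
  { apply Rle_trans with (takagi_head_lip N * (eps / (2 * (takagi_head_lip N + 1)))).
    - apply Rmult_le_compat_l; lra.
    - apply Rmult_le_reg_r with (2 * (takagi_head_lip N + 1)); [lra|]. field_simplify; lra. }
  pose proof (takagi_head_lipschitz x x0 N).
  pose proof (takagi_tail_le x N). pose proof (takagi_tail_le x0 N).
  rewrite (takagi_split x N), (takagi_split x0 N).
  replace (takagi_head x N + takagi_tail x N - (takagi_head x0 N + takagi_tail x0 N))
    with ((takagi_head x N - takagi_head x0 N) + (takagi_tail x N - takagi_tail x0 N)) by ring.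
  eapply Rle_lt_trans; [apply Rabs_triang|].
  assert (Rabs (takagi_tail x N - takagi_tail x0 N) <= (/ 2) ^ N)
    by (unfold Rabs; destruct Rcase_abs; lra).
  lra.
Qed.

(** * Absence of M-points *)

Definition M_violation (g : R -> R) (y c eps : R) : Prop :=
  exists x z, y - eps < x < y /\ y < z < y + eps /\
    c * dist2 (psi g x) (psi g z) < dist2 (psi g x) (psi g y).

Lemma not_M_point_of_violations g y :
  (forall c eps, 1 <= c -> 0 < eps -> M_violation g y c eps) -> ~ M_point g y.
Proof.
  intros Hv [c [eps [hc [heps HM]]]].
  destruct (Hv c eps hc heps) as [x [z [hx [hz hlt]]]].
  specialize (HM x z hx hz). lra.
Qed.

Lemma M_violation_of_bounds g y c eps x z A B :
  y - eps < x < y -> y < z < y + eps -> 0 <= c ->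
  A <= Rabs (g x - g y) -> z - x + Rabs (g x - g z) <= B -> c * B < A ->
  M_violation g y c eps.
Proof.
  intros hx hz hc hA hB hcB. exists x, z. split; [exact hx|]. split; [exact hz|].
  pose proof (dist2_ge_snd (psi g x) (psi g y)) as hy.
  pose proof (dist2_le_abs (psi g x) (psi g z)) as hxz. simpl in hy, hxz.
  rewrite Rabs_minus_sym, Rabs_pos_eq in hxz by lra.
  assert (c * dist2 (psi g x) (psi g z) <= c * B) by (apply Rmult_le_compat_l; lra).
  lra.
Qed.

Section GridScale.

Variables (y c eps : R) (N : nat).

Let q := (/ 2) ^ N.
Let D := / 2 ^ (N * N).

Hypothesis c_ge1 : 1 <= c.
Hypothesis N_ge2 : (2 <= N)%nat.
(* What both estimates below need: c * 10 q^2 < q / 8 - 8 q^2. *)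
Hypothesis N_large : q * (64 + 80 * c) < 1.
Hypothesis N_fine : q < eps / 2.

Lemma grid_scale_facts : 0 < q <= 1 / 64 /\ 0 < D <= q * q.
Proof.
  pose proof (inv_pow2_sqr_le N N_ge2) as hD. fold q D in hD.
  assert (0 < q) by (apply pow_lt; lra).
  assert (0 < D) by (apply Rinv_0_lt_compat, pow_lt; lra).
  split; [split|]; nra.
Qed.

Lemma grid_round : exists m theta, y = (IZR m + theta) * D /\ Rabs theta = distZ (2 ^ (N * N) * y).
Proof.
  destruct (distZ_attained (2 ^ (N * N) * y)) as [m hm].
  exists m, (2 ^ (N * N) * y - IZR m). split; [|now rewrite hm].
  unfold D. pose proof (pow_lt 2 (N * N) ltac:(lra)). field. lra.
Qed.

Lemma takagi_violation_far :
  1 / 8 <= distZ (2 ^ (N * N) * y) -> M_violation takagi_f y c eps.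
Proof.
  intros hfar. destruct grid_scale_facts as [[hq hq64] [hD hDq]].
  pose proof (f_term_le_tail y N) as hty. rewrite f_term_eq in hty. fold q in hty.
  assert (q * (1 / 8) <= q * distZ (2 ^ (N * N) * y)) by (apply Rmult_le_compat_l; lra).
  pose proof (distZ_le_half (2 ^ (N * N) * y)).
  destruct grid_round as [m [theta [hy htheta]]].
  assert (htheta1 : -1 / 2 <= theta <= 1 / 2) by (unfold Rabs in htheta; destruct Rcase_abs; lra).
  set (x := IZR (m - 1) * D). set (z := IZR (m + 1) * D).
  assert (hxy : x - y = (-1 - theta) * D) by (unfold x; rewrite minus_IZR, hy; ring).
  assert (hzy : z - y = (1 - theta) * D) by (unfold z; rewrite plus_IZR, hy; ring).
  assert (hxy2 : Rabs (x - y) <= 2 * D)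
    by (rewrite hxy, Rabs_mult, (Rabs_pos_eq D) by lra; unfold Rabs; destruct Rcase_abs; nra).
  assert (hxz2 : Rabs (x - z) <= 2 * D) by (rewrite Rabs_left1; lra).
  pose proof (takagi_head_close x y N 2 ltac:(lra) hxy2) as hhy.
  pose proof (takagi_head_close x z N 2 ltac:(lra) hxz2) as hhz. fold q in hhy, hhz.
  assert (tx : takagi_tail x N = 0) by apply takagi_tail_grid.
  assert (tz : takagi_tail z N = 0) by apply takagi_tail_grid.
  apply (M_violation_of_bounds _ y c eps x z (q / 8 - 8 * (q * q)) (10 * (q * q))).
  - split; nra.
  - split; nra.
  - lra.
  - rewrite !(takagi_split _ N), tx, Rabs_minus_sym.
    eapply Rle_trans; [|apply Rle_abs].
    pose proof (Rle_abs (takagi_head x N - takagi_head y N)). lra.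
  - rewrite !(takagi_split _ N), tx, tz, !Rplus_0_r. lra.
  - nra.
Qed.

Lemma takagi_violation_near :
  (forall k, (N <= k)%nat -> distZ (2 ^ (k * k) * y) < 1 / 8) -> M_violation takagi_f y c eps.
Proof.
  intros hnear. destruct grid_scale_facts as [[hq hq64] [hD hDq]].
  destruct (takagi_tail_bound y N (1 / 8)) as [_ hty]; [intros k hk; left; auto|].
  fold q in hty.
  pose proof (hnear N (le_n N)).
  destruct grid_round as [m [theta [hy htheta]]].
  assert (htheta1 : -1 / 8 < theta < 1 / 8) by (unfold Rabs in htheta; destruct Rcase_abs; lra).
  set (x := (IZR m - 1 / 2) * D). set (z := (IZR m + 1 / 2) * D).
  assert (hxy : x - y = (-1 / 2 - theta) * D) by (unfold x; rewrite hy; field).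
  assert (hzy : z - y = (1 / 2 - theta) * D) by (unfold z; rewrite hy; field).
  assert (hxy2 : Rabs (x - y) <= 1 * D)
    by (rewrite hxy, Rabs_mult, (Rabs_pos_eq D) by lra; unfold Rabs; destruct Rcase_abs; nra).
  assert (hxz2 : Rabs (x - z) <= 1 * D) by (rewrite Rabs_left1; lra).
  pose proof (takagi_head_close x y N 1 ltac:(lra) hxy2) as hhy.
  pose proof (takagi_head_close x z N 1 ltac:(lra) hxz2) as hhz. fold q in hhy, hhz.
  pose proof (takagi_tail_half_grid m N) as htx. fold q D x in htx.
  assert (tz : takagi_tail z N = takagi_tail x N).
  { replace z with (x + IZR 1 * / 2 ^ (N * N)) by (unfold z, x, D; change (IZR 1) with 1; lra).
    apply takagi_tail_shift. }
  apply (M_violation_of_bounds _ y c eps x z (q / 4 - 4 * (q * q)) (5 * (q * q))).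
  - split; nra.
  - split; nra.
  - lra.
  - rewrite !(takagi_split _ N). eapply Rle_trans; [|apply Rle_abs].
    pose proof (Rle_abs (takagi_head y N - takagi_head x N)).
    rewrite Rabs_minus_sym in hhy. lra.
  - rewrite !(takagi_split _ N), tz.
    replace (takagi_head x N + takagi_tail x N - (takagi_head z N + takagi_tail x N))
      with (takagi_head x N - takagi_head z N) by ring.
    lra.
  - nra.
Qed.

End GridScale.

Lemma takagi_M_violation y c eps : 1 <= c -> 0 < eps -> M_violation takagi_f y c eps.
Proof.
  intros hc heps.
  destruct (pow_inv2_small (Rmin (eps / 2) (/ (64 + 80 * c))))
    as [N0 HN0]; [apply Rmin_pos; [lra | apply Rinv_0_lt_compat; lra]|].
  assert (hN : forall N, (N0 <= N)%nat -> (/ 2) ^ N * (64 + 80 * c) < 1 /\ (/ 2) ^ N < eps / 2).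
  { intros N hN. specialize (HN0 N hN).
    pose proof (Rmin_l (eps / 2) (/ (64 + 80 * c))).
    pose proof (Rmin_r (eps / 2) (/ (64 + 80 * c))).
    split; [|lra].
    apply Rmult_lt_reg_r with (/ (64 + 80 * c)); [apply Rinv_0_lt_compat; lra|].
    rewrite Rmult_assoc, Rinv_r by lra. lra. }
  destruct (classic (forall k, (N0 + 2 <= k)%nat -> distZ (2 ^ (k * k) * y) < 1 / 8))
    as [Hnear | Hfar].
  - apply (takagi_violation_near y c eps (N0 + 2)); try apply hN; auto; lia.
  - destruct (not_all_ex_not _ _ Hfar) as [k hk]. apply imply_to_and in hk.
    destruct hk as [hk hfar].
    apply (takagi_violation_far y c eps k); try apply hN; try lia; auto. lra.
Qed.

Lemma takagi_no_M_point y : ~ M_point takagi_f y.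
Proof. apply not_M_point_of_violations. intros c eps. apply takagi_M_violation. Qed.

(** * Derivatives and M-points *)

Lemma M_point_of_left_lipschitz g x K d :
  0 <= K -> 0 < d -> (forall h, - d < h < 0 -> Rabs (g (x + h) - g x) <= K * - h) ->
  M_point g x.
Proof.
  intros hK hd Hlip. exists (1 + K), d. split; [lra|]. split; [exact hd|].
  intros x' z hx' hz. unfold psi.
  pose proof (Hlip (x' - x) ltac:(lra)) as hg. replace (x + (x' - x)) with x' in hg by ring.
  pose proof (dist2_ge_fst (x', g x') (z, g z)) as hxz. simpl in hxz.
  rewrite Rabs_left in hxz by lra.
  eapply Rle_trans; [apply dist2_le_abs|]. simpl.
  rewrite Rabs_left by lra. nra.
Qed.

Lemma M_point_of_between g x d :
  0 < d -> (forall x' z, x - d < x' < x -> x < z < x + d -> 0 <= (g x - g x') * (g z - g x)) ->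
  M_point g x.
Proof.
  intros hd Hbetween. exists 1, d. split; [lra|]. split; [exact hd|].
  intros x' z hx' hz. rewrite Rmult_1_l. specialize (Hbetween x' z hx' hz).
  apply dist2_le_compat; simpl.
  - rewrite !Rabs_left; lra.
  - apply Rsqr_le_abs_0. unfold Rsqr. pose proof (pow2_ge_0 (g x - g z)). nra.
Qed.

Lemma punctured_nbhs0 (P : R -> Prop) :
  Rbar_locally' (Finite 0) P -> exists d : posreal, forall h, Rabs h < d -> h <> 0 -> P h.
Proof.
  intros [d Hd]. exists d. intros h hd hne. apply Hd; [|exact hne].
  change (Rabs (h - 0) < d). now rewrite Rminus_0_r.
Qed.

Lemma M_point_of_derivative g x (l : Rbar) :
  is_lim (fun h => (g (x + h) - g x) / h) 0 l -> M_point g x.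
Proof.
  set (Q := fun h => (g (x + h) - g x) / h).
  intros Hl. apply is_lim_spec in Hl.
  assert (hdiff : forall x', x' <> x -> g x' - g x = (x' - x) * Q (x' - x)).
  { intros x' hne. unfold Q. replace (x + (x' - x)) with x' by ring. field. lra. }
  assert (hbetween : forall x' z, x' < x < z -> 0 <= Q (x' - x) * Q (z - x) ->
            0 <= (g x - g x') * (g z - g x)).
  { intros x' z [h1 h2] hQ.
    replace (g x - g x') with (- (g x' - g x)) by ring. rewrite (hdiff x'), (hdiff z) by lra.
    replace (- ((x' - x) * Q (x' - x)) * ((z - x) * Q (z - x)))
      with ((x - x') * (z - x) * (Q (x' - x) * Q (z - x))) by ring.
    apply Rmult_le_pos; nra. }
  destruct l as [r | |]; simpl in Hl.
  - destruct (punctured_nbhs0 _ (Hl (mkposreal 1 Rlt_0_1))) as [d Hd]. simpl in Hd.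
    apply (M_point_of_left_lipschitz g x (1 + Rabs r) d);
      [pose proof (Rabs_pos r); lra | apply cond_pos |].
    intros h hh. specialize (Hd h ltac:(rewrite Rabs_left; lra) ltac:(lra)).
    replace (g (x + h) - g x) with (h * Q h) by (unfold Q; field; lra).
    rewrite Rabs_mult, Rabs_left by lra.
    pose proof (Rabs_triang_inv (Q h) r). nra.
  - destruct (punctured_nbhs0 _ (Hl 0)) as [d Hd]. simpl in Hd.
    apply (M_point_of_between g x d); [apply cond_pos|]. intros x' z hx' hz.
    pose proof (Hd (x' - x) ltac:(rewrite Rabs_left; lra) ltac:(lra)).
    pose proof (Hd (z - x) ltac:(rewrite Rabs_pos_eq; lra) ltac:(lra)).
    apply hbetween; nra.
  - destruct (punctured_nbhs0 _ (Hl 0)) as [d Hd]. simpl in Hd.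
    apply (M_point_of_between g x d); [apply cond_pos|]. intros x' z hx' hz.
    pose proof (Hd (x' - x) ltac:(rewrite Rabs_left; lra) ltac:(lra)).
    pose proof (Hd (z - x) ltac:(rewrite Rabs_pos_eq; lra) ltac:(lra)).
    apply hbetween; nra.
Qed.

(** * Monotone subsets of a graph *)

Section MonotoneSubsetOfGraph.

Variables (g : R -> R) (A : R * R -> Prop) (lt : R * R -> R * R -> Prop) (c : R).
Hypothesis A_graph : forall p, A p -> graph g p.
Hypothesis lt_order : strict_linear_order_on A lt.
Hypothesis c_pos : 0 < c.
Hypothesis lt_monotone : forall x y z, A x -> A y -> A z -> lt x y -> lt y z ->
  dist2 x y <= c * dist2 x z.

Lemma A_eq_psi a : A a -> a = psi g (fst a).
Proof. intros ha. destruct a as [a1 a2]. unfold psi. simpl. now rewrite <- (A_graph _ ha). Qed.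

Lemma lt_asym a b : A a -> A b -> lt a b -> ~ lt b a.
Proof.
  destruct lt_order as [irr [trans _]]. intros ha hb hab hba.
  exact (irr a ha (trans a b a ha hb ha hab hba)).
Qed.

Lemma lt_total a b : A a -> A b -> a <> b -> lt a b \/ lt b a.
Proof. destruct lt_order as [_ [_ tot]]. intros ha hb hne. destruct (tot a b) as [|[|]]; tauto. Qed.

Lemma lt_total_fst a b : A a -> A b -> fst a <> fst b -> lt a b \/ lt b a.
Proof. intros ha hb hne. apply lt_total; [exact ha | exact hb | congruence]. Qed.

Lemma same_side_of_close u w1 w2 : A u -> A w1 -> A w2 ->
  (1 + c) * dist2 w1 w2 < dist2 w1 u -> (lt w1 u <-> lt w2 u).
Proof.
  intros hu h1 h2 hd. pose proof (dist2_ge0 w1 w2). pose proof (dist2_ge0 w2 u).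
  assert (n1 : w1 <> u) by (intros ->; rewrite dist2_refl in hd; nra).
  assert (n2 : w2 <> u) by (intros ->; nra).
  destruct (lt_total w1 u h1 hu n1) as [a1|a1]; destruct (lt_total w2 u h2 hu n2) as [a2|a2].
  - tauto.
  - pose proof (lt_monotone w1 u w2 h1 hu h2 a1 a2). nra.
  - pose proof (lt_monotone w2 u w1 h2 hu h1 a2 a1). pose proof (dist2_triangle w1 w2 u).
    rewrite (dist2_sym w2 w1) in *. nra.
  - pose proof (lt_asym _ _ hu h1 a1). pose proof (lt_asym _ _ hu h2 a2). tauto.
Qed.

Variables (al be : R).
Hypothesis g_cont : continuity g.
Hypothesis A_dense : forall t, al <= t <= be -> forall r, 0 < r ->
  exists p, A p /\ dist2 (psi g t) p < r.

Lemma A_point_near t r : al <= t <= be -> 0 < r ->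
  exists p, A p /\ dist2 (psi g t) p < r /\ t - r < fst p < t + r.
Proof.
  intros ht hr. destruct (A_dense t ht r hr) as [p [hp hd]]. exists p.
  pose proof (dist2_ge_fst (psi g t) p) as hf. simpl in hf.
  repeat split; auto; unfold Rabs in hf; destruct Rcase_abs; lra.
Qed.

Lemma side_locally_constant u m : A u -> 0 < m ->
  exists tau, 0 < tau /\ forall a b, A a -> A b -> al <= fst a <= be -> al <= fst b <= be ->
    m <= Rabs (fst a - fst u) -> Rabs (fst a - fst b) < tau -> (lt a u <-> lt b u).
Proof.
  intros hu hm. set (e := m / (2 * (1 + c))).
  assert (he : 0 < e) by (apply Rdiv_lt_0_compat; lra).
  destruct (Heine g (fun t => al <= t <= be) (compact_P3 al be) (fun t _ => g_cont t)
              (mkposreal e he)) as [t0 Ht0]. simpl in Ht0.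
  exists (Rmin t0 e). split; [apply Rmin_pos; [apply cond_pos | exact he]|].
  intros a b ha hb ra rb hma hab.
  pose proof (Rmin_l t0 e). pose proof (Rmin_r t0 e).
  apply (same_side_of_close u a b hu ha hb).
  assert (hg : Rabs (g (fst a) - g (fst b)) < e) by (apply Ht0; auto; lra).
  pose proof (dist2_le_abs a b) as hdab.
  rewrite (A_eq_psi a ha), (A_eq_psi b hb) in hdab. simpl in hdab.
  rewrite <- (A_eq_psi a ha), <- (A_eq_psi b hb) in hdab.
  pose proof (dist2_ge_fst a u).
  assert (hdab2 : (1 + c) * dist2 a b < (1 + c) * (2 * e)) by (apply Rmult_lt_compat_l; lra).
  replace ((1 + c) * (2 * e)) with m in hdab2 by (unfold e; field; lra). lra.
Qed.

Lemma constant_on_interval (P : R * R -> Prop) lo hi tau :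
  al <= lo -> hi <= be -> 0 < tau ->
  (forall a b, A a -> A b -> lo <= fst a <= hi -> lo <= fst b <= hi ->
     Rabs (fst a - fst b) < tau -> (P a <-> P b)) ->
  forall a b, A a -> A b -> lo <= fst a <= hi -> lo <= fst b <= hi -> (P a <-> P b).
Proof.
  intros hlo hhi htau Hloc.
  assert (Hord : forall a b, A a -> A b -> lo <= fst a -> fst a <= fst b -> fst b <= hi ->
                   (P a <-> P b)).
  { intros a b ha hb h1 h2 h3.
    assert (Hind : forall n b, A b -> fst a <= fst b <= hi -> fst b - fst a < INR n * tau / 2 ->
                     (P a <-> P b)).
    { induction n as [|n IH]; intros b' hb' hr hlt; [simpl in hlt; lra|].
      rewrite S_INR in hlt.
      destruct (Rlt_or_le (fst b' - fst a) tau) as [hclose|hfar].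
      - apply Hloc; auto; try lra. rewrite Rabs_left1; lra.
      - destruct (A_point_near (fst b' - 3 * tau / 4) (tau / 4)) as [p [hp [_ hpx]]]; [lra | lra |].
        rewrite (IH p hp ltac:(lra) ltac:(lra)).
        apply Hloc; auto; try lra. rewrite Rabs_left1; lra. }
    destruct (nfloor_ex ((fst b - fst a) * 2 / tau)) as [n [_ hn]].
    { apply Rmult_le_pos; [lra | left; apply Rinv_0_lt_compat; lra]. }
    apply (Hind (Datatypes.S n)); auto. rewrite S_INR.
    replace (fst b - fst a) with ((fst b - fst a) * 2 / tau * (tau / 2)) by (field; lra). nra. }
  intros a b ha hb ra rb. destruct (Rle_or_lt (fst a) (fst b)).
  - apply Hord; auto; lra.
  - symmetry. apply Hord; auto; lra.
Qed.

Lemma same_side u v w : A u -> A v -> A w -> al <= fst v <= be -> al <= fst w <= be ->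
  (fst v < fst u /\ fst w < fst u) \/ (fst u < fst v /\ fst u < fst w) -> (lt v u <-> lt w u).
Proof.
  intros hu hv hw rv rw hs.
  set (m := Rmin (Rabs (fst v - fst u)) (Rabs (fst w - fst u))).
  assert (hm : 0 < m) by (apply Rmin_pos; apply Rabs_pos_lt; lra).
  pose proof (Rmin_l (Rabs (fst v - fst u)) (Rabs (fst w - fst u))) as hmv.
  pose proof (Rmin_r (Rabs (fst v - fst u)) (Rabs (fst w - fst u))) as hmw. fold m in hmv, hmw.
  destruct (side_locally_constant u m hu hm) as [tau [htau Hloc]].
  assert (hlo : al <= Rmin (fst v) (fst w)) by (apply Rmin_glb; lra).
  assert (hhi : Rmax (fst v) (fst w) <= be) by (apply Rmax_lub; lra).
  pose proof (Rmin_l (fst v) (fst w)). pose proof (Rmin_r (fst v) (fst w)).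
  pose proof (Rmax_l (fst v) (fst w)). pose proof (Rmax_r (fst v) (fst w)).
  apply (constant_on_interval (fun a => lt a u) (Rmin (fst v) (fst w)) (Rmax (fst v) (fst w)) tau);
    auto; try lra.
  intros a b ha hb ra rb. apply Hloc; auto; try lra.
  destruct (Rle_or_lt (fst v) (fst w));
    [rewrite Rmin_left, Rmax_right in ra by lra | rewrite Rmin_right, Rmax_left in ra by lra];
    unfold Rabs in *; repeat destruct Rcase_abs; lra.
Qed.

Lemma lt_between v1 v2 v3 : A v1 -> A v2 -> A v3 ->
  al <= fst v1 -> fst v1 < fst v2 -> fst v2 < fst v3 -> fst v3 <= be ->
  (lt v1 v2 /\ lt v2 v3) \/ (lt v3 v2 /\ lt v2 v1).
Proof.
  intros h1 h2 h3 o1 o2 o3 o4.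
  assert (L : forall u v w, A u -> A v -> A w -> al <= fst v <= be -> al <= fst w <= be ->
    (fst v < fst u /\ fst w < fst u) \/ (fst u < fst v /\ fst u < fst w) ->
    lt v u -> lt w u)
    by (intros u v w hu hv hw rv rw hs; exact (proj1 (same_side u v w hu hv hw rv rw hs))).
  pose proof (lt_asym v1 v2 h1 h2). pose proof (lt_asym v2 v3 h2 h3).
  pose proof (lt_asym v1 v3 h1 h3).
  destruct (lt_total_fst v1 v2 h1 h2 ltac:(lra)) as [a12|a21];
  destruct (lt_total_fst v2 v3 h2 h3 ltac:(lra)) as [a23|a32]; auto;
  destruct (lt_total_fst v1 v3 h1 h3 ltac:(lra)) as [a13|a31]; exfalso.
  - pose proof (L v3 v1 v2 h3 h1 h2 ltac:(lra) ltac:(lra) ltac:(lra) a13). tauto.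
  - pose proof (L v1 v3 v2 h1 h3 h2 ltac:(lra) ltac:(lra) ltac:(lra) a31). tauto.
  - pose proof (L v1 v2 v3 h1 h2 h3 ltac:(lra) ltac:(lra) ltac:(lra) a21). tauto.
  - pose proof (L v3 v2 v1 h3 h2 h1 ltac:(lra) ltac:(lra) ltac:(lra) a23). tauto.
Qed.

Lemma monotone_on_graph u lx hx lz hz : A u -> al <= lx -> hx <= be -> al <= lz -> hz <= be ->
  (forall a b, A a -> A b -> lx < fst a < hx -> lz < fst b < hz -> dist2 a u <= c * dist2 a b) ->
  forall x z, lx < x < hx -> lz < z < hz -> dist2 (psi g x) u <= c * dist2 (psi g x) (psi g z).
Proof.
  intros hu h1 h2 h3 h4 Hmono x z ix iz. apply Rle_plus_epsilon. intros e he.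
  set (r := Rmin (e / (1 + 2 * c)) (Rmin (Rmin (x - lx) (hx - x)) (Rmin (z - lz) (hz - z)))).
  assert (hr : 0 < r) by (repeat apply Rmin_pos; try lra; apply Rdiv_lt_0_compat; lra).
  assert (hre : r * (1 + 2 * c) <= e).
  { replace e with (e / (1 + 2 * c) * (1 + 2 * c)) by (field; lra).
    apply Rmult_le_compat_r; [lra | apply Rmin_l]. }
  assert (hrx : r <= x - lx /\ r <= hx - x /\ r <= z - lz /\ r <= hz - z).
  { pose proof (Rmin_r (e / (1 + 2 * c)) (Rmin (Rmin (x - lx) (hx - x)) (Rmin (z - lz) (hz - z))))
      as hr2.
    pose proof (Rmin_l (Rmin (x - lx) (hx - x)) (Rmin (z - lz) (hz - z))).
    pose proof (Rmin_r (Rmin (x - lx) (hx - x)) (Rmin (z - lz) (hz - z))).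
    pose proof (Rmin_l (x - lx) (hx - x)). pose proof (Rmin_r (x - lx) (hx - x)).
    pose proof (Rmin_l (z - lz) (hz - z)). pose proof (Rmin_r (z - lz) (hz - z)).
    fold r in hr2. lra. }
  destruct (A_point_near x r ltac:(lra) hr) as [a [ha [da ia]]].
  destruct (A_point_near z r ltac:(lra) hr) as [b [hb [db ib]]].
  pose proof (Hmono a b ha hb ltac:(lra) ltac:(lra)) as hab.
  pose proof (dist2_triangle (psi g x) a u).
  pose proof (dist2_triangle a (psi g x) (psi g z)).
  pose proof (dist2_triangle a (psi g z) b).
  rewrite (dist2_sym a (psi g x)) in *.
  assert (c * dist2 a b <= c * (2 * r + dist2 (psi g x) (psi g z)))
    by (apply Rmult_le_compat_l; lra).
  nra.
Qed.

Lemma M_point_of_lt_triple u vL vR : A u -> A vL -> A vR ->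
  al <= fst vL -> fst vL < fst u -> fst u < fst vR -> fst vR <= be ->
  lt vL u -> lt u vR -> M_point g (fst u).
Proof.
  intros hu hL hR o1 o2 o3 o4 lL lR.
  set (eps := Rmin (fst u - al) (be - fst u)).
  pose proof (Rmin_l (fst u - al) (be - fst u)) as he1.
  pose proof (Rmin_r (fst u - al) (be - fst u)) as he2.
  fold eps in he1, he2.
  assert (heps : 0 < eps) by (apply Rmin_pos; lra).
  exists (Rmax c 1), eps. split; [apply Rmax_r|]. split; [exact heps|].
  intros x z hx hz.
  assert (Hmono : dist2 (psi g x) u <= c * dist2 (psi g x) (psi g z)).
  { apply (monotone_on_graph u (fst u - eps) (fst u) (fst u) (fst u + eps)); auto; try lra.
    intros a b ha hb ia ib. apply lt_monotone; auto.
    - exact (proj1 (same_side u vL a hu hL ha ltac:(lra) ltac:(lra) ltac:(lra)) lL).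
    - destruct (lt_total_fst b u hb hu ltac:(lra)) as [hbu|hub]; [exfalso|exact hub].
      apply (lt_asym u vR hu hR lR).
      exact (proj2 (same_side u vR b hu hR hb ltac:(lra) ltac:(lra) ltac:(lra)) hbu). }
  rewrite (A_eq_psi u hu) in Hmono.
  pose proof (dist2_ge0 (psi g x) (psi g z)). pose proof (Rmax_l c 1). nra.
Qed.

End MonotoneSubsetOfGraph.

Lemma strict_linear_order_on_rev A lt :
  strict_linear_order_on A lt -> strict_linear_order_on A (fun a b => lt b a).
Proof.
  intros [irr [trans tot]]. split; [exact irr|]. split.
  - intros x y z hx hy hz hxy hyz. exact (trans z y x hz hy hx hyz hxy).
  - intros x y hx hy. destruct (tot x y hx hy) as [h|[h|h]]; tauto.
Qed.

Lemma monotone_rev A lt c :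
  (forall x y z, A x -> A y -> A z -> lt x y -> lt y z -> dist2 x y <= c * dist2 x z) ->
  forall x y z, A x -> A y -> A z -> lt y x -> lt z y -> dist2 x y <= (1 + c) * dist2 x z.
Proof.
  intros Hmono x y z hx hy hz hyx hzy. pose proof (Hmono z y x hz hy hx hzy hyx).
  pose proof (dist2_triangle x z y). rewrite (dist2_sym z y), (dist2_sym z x) in *. lra.
Qed.

Lemma dense_interval_of_interior g A p : continuity g ->
  interior_in (graph g) (closure_in (graph g) A) p ->
  exists al be, al < be /\ forall t, al <= t <= be -> forall r, 0 < r ->
    exists q, A q /\ dist2 (psi g t) q < r.
Proof.
  intros hc [Gp [r [hr Hin]]]. unfold graph in Gp.
  destruct (hc (fst p) (r / 2) ltac:(lra)) as [e0 [he0 Hcont]].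
  simpl in Hcont. unfold R_dist in Hcont.
  set (eta := Rmin e0 (r / 2)).
  assert (heta : 0 < eta) by (apply Rmin_pos; lra).
  pose proof (Rmin_l e0 (r / 2)) as he1. pose proof (Rmin_r e0 (r / 2)) as he2.
  fold eta in he1, he2.
  exists (fst p - eta / 2), (fst p + eta / 2). split; [lra|].
  intros t ht rho hrho.
  assert (hg : Rabs (g t - g (fst p)) < r / 2).
  { destruct (Req_dec t (fst p)) as [-> | hne].
    - rewrite Rminus_diag, Rabs_R0. lra.
    - apply Hcont. split; [split; [constructor | congruence]|].
      unfold Rabs; destruct Rcase_abs; lra. }
  assert (hcl : closure_in (graph g) A (psi g t)).
  { apply Hin; [reflexivity|].
    eapply Rle_lt_trans; [apply dist2_le_abs|]. simpl. rewrite Gp.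
    rewrite (Rabs_minus_sym (fst p)), (Rabs_minus_sym (g (fst p))).
    unfold Rabs at 1; destruct Rcase_abs; lra. }
  destruct hcl as [_ hcl]. destruct (hcl rho hrho) as [q [_ [hq hd]]]. eauto.
Qed.

Lemma monotone_subset_nowhere_dense g A : continuity g -> (forall y, ~ M_point g y) ->
  (forall p, A p -> graph g p) -> monotone_set A -> nowhere_dense_in (graph g) A.
Proof.
  intros hc hM hA [lt [c [hord [hc0 hmono]]]] p hint.
  destruct (dense_interval_of_interior g A p hc hint) as [al [be [hab hdense]]].
  destruct (A_point_near g A al be hdense (al + (be - al) / 4) ((be - al) / 8))
    as [v1 [h1 [_ i1]]]; try lra.
  destruct (A_point_near g A al be hdense (al + (be - al) / 2) ((be - al) / 8))
    as [v2 [h2 [_ i2]]]; try lra.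
  destruct (A_point_near g A al be hdense (al + 3 * (be - al) / 4) ((be - al) / 8))
    as [v3 [h3 [_ i3]]]; try lra.
  apply (hM (fst v2)).
  destruct (lt_between g A lt c hA hord hc0 hmono al be hc hdense v1 v2 v3 h1 h2 h3)
    as [[l12 l23] | [l32 l21]]; try lra.
  - exact (M_point_of_lt_triple g A lt c hA hord hc0 hmono al be hc hdense v2 v1 v3
             h2 h1 h3 ltac:(lra) ltac:(lra) ltac:(lra) ltac:(lra) l12 l23).
  - exact (M_point_of_lt_triple g A (fun a b => lt b a) (1 + c) hA
             (strict_linear_order_on_rev A lt hord) ltac:(lra) (monotone_rev A lt c hmono)
             al be hc hdense v2 v1 v3 h2 h1 h3 ltac:(lra) ltac:(lra) ltac:(lra) ltac:(lra) l21 l32).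
Qed.

Theorem proposition4p8 :
  continuity takagi_f /\
  (forall y : R, ~ M_point takagi_f y) /\
  (forall S : R * R -> Prop,
      (forall p, S p -> graph takagi_f p) -> monotone_set S -> meager_in (graph takagi_f) S) /\
  (forall x : R, ~ exists l : Rbar,
      is_lim (fun h => (takagi_f (x + h) - takagi_f x) / h) 0 l).
Proof.
  split; [exact takagi_continuous|].
  split; [exact takagi_no_M_point|].
  split.
  - intros S hS hmono. exists (fun _ => S). split.
    + intros _. exact (monotone_subset_nowhere_dense takagi_f S takagi_continuous
                         takagi_no_M_point hS hmono).
    + intros p hp. exists O. exact hp.
  - intros x [l hl]. exact (takagi_no_M_point x (M_point_of_derivative takagi_f x l hl)).
Qed.
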